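(* For any finite simple graph $X$, the increasing extended threshold GCA map $\mathbf{F}^\uparrow$ and the decreasing extended threshold GCA map $\mathbf{F}^\downarrow$ are topologically conjugate: there is a bijection $\psi:\mathcal{S}\to\mathcal{S}$ with $\psi\circ\mathbf{F}^\uparrow=\mathbf{F}^\downarrow\circ\psi$.
   Context: Let $X$ be a finite simple graph with vertices $1,\dots,n$; $d(v)$ is the degree of $v$ and $n[v]$ the closed neighborhood of $v$. An extended vertex state is $s_v=(x_v,k_v)\in\{0,1\}\times\{1,\dots,d(v)+1\}$; $\mathcal{S}=\prod_v(\{0,1\}\times\{1,\dots,d(v)+1\})$. Let $\sigma(x[v])=|\{u\in n[v]:x_u=1\}|$. Both vertex functions set $x_v'=1$ iff $\sigma(x[v])\ge k_v$ (else $0$). Increasing: $k_v'=k_v+1$ if $x_v=0$ and $\sigma(x[v])\ge k_v$, else $k_v'=k_v$. Decreasing: $k_v'=k_v-1$ if $x_v=1$ and $\sigma(x[v])<k_v$, else $k_v'=k_v$. The GCA maps $\mathbf{F}^\uparrow,\mathbf{F}^\downarrow:\mathcal{S}\to\mathcal{S}$ apply the respective vertex function at all vertices simultaneously (each using the current state). *)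

From mathcomp Require Import all_boot.
Set Implicit Arguments. Unset Strict Implicit. Unset Printing Implicit Defensive.

Section ExtThreshold.
Variables (T : finType) (e : rel T).

Definition deg (v : T) : nat := #|[set u | e v u]|.
Definition cnbhd (v : T) : {set T} := [set u | (u == v) || e v u].

Definition raw := {ffun T -> bool * nat}.
Definition valid (s : raw) : bool :=
  [forall v, (1 <= (s v).2) && ((s v).2 <= deg v + 1)].
Definition state := {s : raw | valid s}.

Definition sigma (s : raw) (v : T) : nat := #|[set u in cnbhd v | (s u).1]|.

Definition Fup_raw (s : raw) : raw :=
  [ffun v => ((s v).2 <= sigma s v,
              if ~~ (s v).1 && ((s v).2 <= sigma s v) then (s v).2.+1 else (s v).2)].
Definition Fdown_raw (s : raw) : raw :=
  [ffun v => ((s v).2 <= sigma s v,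
              if (s v).1 && (sigma s v < (s v).2) then (s v).2.-1 else (s v).2)].

Lemma sigma_le_deg (s : raw) (v : T) : ~~ (s v).1 -> sigma s v <= deg v.
Proof.
move=> Hx; apply: subset_leq_card; apply/subsetP => u.
rewrite !inE => /andP[/orP[/eqP->|Heu] Hu]; first by rewrite Hu in Hx.
by [].
Qed.

Lemma sigma_ge1 (s : raw) (v : T) : (s v).1 -> 0 < sigma s v.
Proof. by move=> Hx; apply/card_gt0P; exists v; rewrite !inE eqxx Hx. Qed.

Lemma Fup_valid (s : state) : valid (Fup_raw (val s)).
Proof.
case: s => s /= /forallP Hs; apply/forallP => v; rewrite ffunE /=.
have /andP[H1 H2] := Hs v.
case: ifP => [/andP[Hx Hk]|_]; last by rewrite H1 H2.
have Hd := sigma_le_deg Hx.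
rewrite addn1 ltnS; exact: leq_trans Hk Hd.
Qed.

Lemma Fdown_valid (s : state) : valid (Fdown_raw (val s)).
Proof.
case: s => s /= /forallP Hs; apply/forallP => v; rewrite ffunE /=.
have /andP[H1 H2] := Hs v.
case: ifP => [/andP[Hx Hk]|_]; last by rewrite H1 H2.
have Hg := sigma_ge1 Hx.
apply/andP; split.
- by case: (s v).2 Hk H2 => [|[|k]] //= Hk; rewrite ltnS leqn0 in Hk; rewrite (eqP Hk) in Hg.
- by apply: leq_trans (leq_pred _) H2.
Qed.

Definition Fup (s : state) : state := exist _ (Fup_raw (val s)) (Fup_valid s).
Definition Fdown (s : state) : state := exist _ (Fdown_raw (val s)) (Fdown_valid s).

End ExtThreshold.

(* Reflect every vertex state: (x, k) |-> (~~ x, d(v) + 2 - k).  Since n[v] has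
   d(v) + 1 elements, the reflected neighbourhood count is d(v) + 1 - sigma, so
   the threshold test k <= sigma turns into its negation sigma < k.  Hence a
   vertex that is off and fires (k increases) corresponds to a vertex that is on
   and does not fire (k decreases), and the reflection, an involution, conjugates
   the increasing map to the decreasing one. *)
From mathcomp Require Import all_boot zify.

Set Implicit Arguments.
Unset Strict Implicit.
Unset Printing Implicit Defensive.

Definition reflect_vertex (d : nat) (p : bool * nat) : bool * nat :=
  (~~ p.1, d.+2 - p.2).

Definition up_vertex (p : bool * nat) (sg : nat) : bool * nat :=
  (p.2 <= sg, if ~~ p.1 && (p.2 <= sg) then p.2.+1 else p.2).

Definition down_vertex (p : bool * nat) (sg : nat) : bool * nat :=
  (p.2 <= sg, if p.1 && (sg < p.2) then p.2.-1 else p.2).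

Lemma reflect_vertexK (d : nat) (p : bool * nat) :
  p.2 <= d.+1 -> reflect_vertex d (reflect_vertex d p) = p.
Proof. by case: p => x k /= Hk; rewrite /reflect_vertex /= negbK; congr pair; lia. Qed.

Lemma reflect_up_vertex (d : nat) (p : bool * nat) (sg : nat) :
  1 <= p.2 <= d.+1 -> sg <= d.+1 ->
  reflect_vertex d (up_vertex p sg) = down_vertex (reflect_vertex d p) (d.+1 - sg).
Proof.
case: p => x k /= /andP[Hk1 Hk2] Hsg.
have Hthr : (d.+2 - k <= d.+1 - sg) = ~~ (k <= sg) by apply/idP/idP; lia.
rewrite /up_vertex /down_vertex /reflect_vertex /= Hthr.
by case: x; case: (leqP k sg) => Hk //=; congr pair; case: ltnP; lia.
Qed.

Section Reflection.
Variables (T : finType) (e : rel T).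

Definition reflect_raw (s : raw T) : raw T :=
  [ffun v => reflect_vertex (deg e v) (s v)].

Lemma reflect_valid (s : state e) : valid e (reflect_raw (val s)).
Proof.
case: s => s /= /forallP Hs; apply/forallP => v; rewrite ffunE /=.
by have /andP[H1 H2] := Hs v; apply/andP; split; lia.
Qed.

Definition reflect_state (s : state e) : state e :=
  exist _ (reflect_raw (val s)) (reflect_valid s).

Lemma reflect_stateK : involutive reflect_state.
Proof.
case=> s Hs; apply: val_inj => /=; apply/ffunP => v; rewrite !ffunE.
by have /andP[_ H2] := forallP Hs v; rewrite reflect_vertexK // -addn1.
Qed.

Hypothesis e_irr : irreflexive e.

Lemma card_cnbhd (v : T) : #|cnbhd e v| = (deg e v).+1.
Proof.
have -> : cnbhd e v = v |: [set u | e v u] by apply/setP => u; rewrite !inE.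
by rewrite cardsU1 inE e_irr.
Qed.

Lemma sigma_le_card (s : raw T) (v : T) : sigma e s v <= (deg e v).+1.
Proof.
rewrite -card_cnbhd; apply: subset_leq_card.
by apply/subsetP => u; rewrite inE => /andP[].
Qed.

Lemma sigma_reflect (s : raw T) (v : T) :
  sigma e (reflect_raw s) v = (deg e v).+1 - sigma e s v.
Proof.
rewrite /sigma -card_cnbhd -(cardsID [set u | (s u).1] (cnbhd e v)).
have -> : [set u in cnbhd e v | (reflect_raw s u).1] = cnbhd e v :\: [set u | (s u).1].
  by apply/setP => u; rewrite !inE ffunE andbC.
have -> : [set u in cnbhd e v | (s u).1] = cnbhd e v :&: [set u | (s u).1].
  by apply/setP => u; rewrite !inE.
by rewrite addKn.
Qed.

Lemma reflect_Fup (s : state e) : reflect_state (Fup s) = Fdown (reflect_state s).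
Proof.
case: s => s Hs; apply: val_inj; apply/ffunP => v; rewrite /= !ffunE sigma_reflect.
have Hv := forallP Hs v; rewrite addn1 in Hv.
exact: (reflect_up_vertex Hv (sigma_le_card s v)).
Qed.

End Reflection.

Theorem corollary3p5 (T : finType) (e : rel T) :
  symmetric e -> irreflexive e ->
  exists psi : state e -> state e,
    bijective psi /\ (forall s, psi (Fup s) = Fdown (psi s)).
Proof.
move=> _ e_irr; exists (@reflect_state T e); split.
- exact: inv_bij (@reflect_stateK T e).
- exact: reflect_Fup.
Qed.
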